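(* Let $I$ be a non-empty set. Then $\mathbb{M}_I(\mathbb{C})$ is Johnson pseudo-Connes amenable if and only if $I$ is finite.
   Context: $\mathbb{M}_I(\mathbb{C})$ is the Banach algebra of $I\times I$ complex matrices $[a_{i,j}]$ with finite norm $\sum_{i,j\in I}|a_{i,j}|$ (i.e. $\ell^1(I\times I)$) under matrix multiplication; it is a dual Banach algebra with predual $c_0(I\times I)$. A dual Banach algebra is a Banach algebra $\mathcal{A}$ with a closed $\mathcal{A}$-submodule $\mathcal{A}_*$ of $\mathcal{A}^*$ such that $\mathcal{A}=(\mathcal{A}_* )^*$. For a bimodule $E$, $\sigma wc(E)$ is the set of $x\in E$ for which $a\mapsto a\cdot x$, $a\mapsto x\cdot a$ are weak$^*$-weak continuous. $\mathcal{A}\hat{\otimes}\mathcal{A}$ has actions $a\cdot(b\otimes c)=ab\otimes c$, $(b\otimes c)\cdot a=b\otimes ca$; duals carry the dual actions. $\pi_{\mathcal{A}}$ is the multiplication map $\mathcal{A}\hat{\otimes}\mathcal{A}\to\mathcal{A}$, $i_{\mathcal{A}_*}:\mathcal{A}_*\hookrightarrow\mathcal{A}^*$ the canonical embedding. $\mathcal{A}$ is Johnson pseudo-Connes amenable if there is a (not necessarily bounded) net $(m_\alpha)$ in $(\mathcal{A}\hat{\otimes}\mathcal{A})^{**}$ with $\langle T,a\cdot m_\alpha\rangle=\langle T,m_\alpha\cdot a\rangle$ for all $a\in\mathcal{A}$, $T\in\sigma wc((\mathcal{A}\hat{\otimes}\mathcal{A})^* )$, $\alpha$, and $i_{\mathcal{A}_*}^*\pi_{\mathcal{A}}^{**}(m_\alpha)a\to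 a$ for every $a\in\mathcal{A}$. *)

From HB Require Import structures.
From mathcomp Require Import all_boot all_order all_algebra finmap.
From mathcomp Require Import boolp classical_sets cardinality filter reals.
From mathcomp Require Import complex.

Set Implicit Arguments.
Unset Strict Implicit.
Unset Printing Implicit Defensive.
Import Order.TTheory GRing.Theory Num.Theory.
Local Open Scope ring_scope.
Local Open Scope classical_set_scope.

Section JPCA.
Variable R : realType.
Local Notation C := (R[i]).

Section Families.
Variable J : choiceType.

Definition psum (f : J -> C) (F : {fset J}) : C := \sum_(j <- F) f j.

Definition has_sum (f : J -> C) (s : C) : Prop :=
  forall e : C, 0 < e -> exists F0 : {fset J}, forall F : {fset J},
    (F0 `<=` F)%fset -> `|psum f F - s| < e.

(* the sum of a summable family (junk value otherwise) *)
Definition usum (f : J -> C) : C := xget 0 [set s | has_sum f s].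

Definition ell1 (f : J -> C) : Prop :=
  exists M : C, forall F : {fset J}, psum (fun j => `|f j|) F <= M.

Definition ell1_le (f : J -> C) (e : C) : Prop :=
  forall F : {fset J}, psum (fun j => `|f j|) F <= e.

Definition ellinf (f : J -> C) : Prop := exists M : C, forall j, `|f j| <= M.

Definition c0 (f : J -> C) : Prop :=
  forall e : C, 0 < e -> exists F : {fset J}, forall j, j \notin F -> `|f j| < e.

Definition ellinf_dual (m : (J -> C) -> C) : Prop :=
  (forall (c : C) (S T : J -> C), ellinf S -> ellinf T ->
      m (fun j => c * S j + T j) = c * m S + m T) /\
  (exists M : C, forall (T : J -> C) (K : C),
      (forall j, `|T j| <= K) -> `|m T| <= M * K).

End Families.

Definition cvgC {X : Type} (F : set_system X) (g : X -> C) (l : C) : Prop :=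
  forall e : C, 0 < e -> F [set x | `|g x - l| < e].

Variable I : choiceType.
Definition J2 : choiceType := (I * I)%type.
Definition J4 : choiceType := (I * I * I * I)%type.

(* A = M_I(C) = l^1(I x I) *)
Definition Mat := J2 -> C.

Definition matmul (a b : Mat) : Mat :=
  fun x => usum (fun q : I => a (x.1, q) * b (q, x.2)).

(* duality pairing of A = (c_0(I x I))^star with its predual c_0(I x I) *)
Definition pair_pre (a f : Mat) : C := usum (fun x : J2 => a x * f x).

(* A (^) A is identified with l^1(I^4) through
   (b (x) c)(i,j,k,l) = b(i,j) c(k,l); its dual (A (^) A)^star is l^oo(I^4).
   Dual module actions on T in (A (^) A)^star :
     <a.T, x> = <T, x.a>,   <T.a, x> = <T, a.x>. *)
Definition act_l (a : Mat) (T : J4 -> C) : J4 -> C :=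
  fun y => let '(i, j, k, l) := y in
    usum (fun q : I => a (l, q) * T (i, j, k, q)).
Definition act_r (T : J4 -> C) (a : Mat) : J4 -> C :=
  fun y => let '(i, j, k, l) := y in
    usum (fun q : I => T (q, j, k, l) * a (q, i)).

Definition wstar_cvg (F : set_system Mat) (a0 : Mat) : Prop :=
  forall f : Mat, c0 f -> cvgC F (fun a => pair_pre a f) (pair_pre a0 f).

(* weak^star-weak continuity of a map A -> (A (^) A)^star = l^oo(I^4), the weak
   topology being sigma((A(^)A)^star, (A(^)A)^star-star), tested on filters *)
Definition wstar_weak_cont (phi : Mat -> (J4 -> C)) : Prop :=
  forall (a0 : Mat), ell1 a0 ->
  forall F : set_system Mat, Filter F -> F (@ell1 J2) -> wstar_cvg F a0 ->
  forall m : (J4 -> C) -> C, ellinf_dual m ->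
    cvgC F (fun a => m (phi a)) (m (phi a0)).

Definition sigma_wc (T : J4 -> C) : Prop :=
  ellinf T /\ wstar_weak_cont (fun a => act_l a T)
           /\ wstar_weak_cont (fun a => act_r T a).

(* i_{A_*}^star pi_A^star-star (m) in A = (c_0)^star, through its coordinates
   <.., delta_(i,l)>; here pi_A^star(phi)(i,j,k,l) = [j = k] phi(i,l). *)
Definition ipi (m : (J4 -> C) -> C) : Mat :=
  fun x => m (fun y => let '(p, j, k, q) := y in
                 ((p == x.1) && (q == x.2) && (j == k))%:R).

Definition directed (D : Type) (le : D -> D -> Prop) : Prop :=
  (exists d : D, True) /\ (forall d, le d d) /\
  (forall d1 d2 d3, le d1 d2 -> le d2 d3 -> le d1 d3) /\
  (forall d1 d2, exists d3, le d1 d3 /\ le d2 d3).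

Definition johnson_pseudo_connes_amenable : Prop :=
  exists (D : Type) (le : D -> D -> Prop) (m : D -> (J4 -> C) -> C),
    directed le /\
    (forall d, ellinf_dual (m d)) /\
    (forall d (a : Mat) (T : J4 -> C), ell1 a -> sigma_wc T ->
        m d (act_r T a) = m d (act_l a T)) /\
    (forall a : Mat, ell1 a ->
       forall e : C, 0 < e -> exists d0, forall d, le d0 d ->
         ell1_le (fun x => matmul (ipi (m d)) a x - a x) e).

End JPCA.

From HB Require Import structures.
From mathcomp Require Import all_boot all_order all_algebra finmap.
From mathcomp Require Import boolp classical_sets cardinality filter reals.
From mathcomp Require Import complex.

(* Let m be a bounded functional on l^oo(I^4) = (A (^) A)^* commuting with A on
   sigma wc, and b = i^* pi^** m in A. The entry b(s, u) is m at
   T_su(i, j, k, l) = [i = s][l = u][j = k], and T_su lies in sigma wc: each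
   module action on it has the form a |-> a o p * G with |G| <= 1, and composing
   such a map with a bounded functional is pairing with an l^1, hence c_0,
   element of the predual. As E_su . T_su = T_ss and T_su . E_su = T_uu, the
   diagonal of b is constant. If I is infinite, m (\sum_(s in L) T_ss) =
   |L| b(s, s) is bounded by ||m|| for every finite L, so the diagonal vanishes,
   contradicting b E_ss ~ E_ss. If I is finite, the diagonal
   \sum_k E_(k, i0) (x) E_(i0, k) commutes with A and is mapped to 1 by pi. *)

Set Implicit Arguments.
Unset Strict Implicit.
Unset Printing Implicit Defensive.
Import Order.TTheory GRing.Theory Num.Theory.
Local Open Scope ring_scope.
Local Open Scope classical_set_scope.

Lemma sumr_const_seq {V : nmodType} (T : Type) (s : seq T) (x : V) :
  \sum_(j <- s) x = x *+ size s.
Proof. by rewrite big_const_seq count_predT iter_addr_0. Qed.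

Lemma sumr_indicator {S : pzSemiRingType} (T : eqType) (s : seq T) (z : T) (h : T -> S) :
  uniq s ->
  \sum_(x <- s) (z == x)%:R * h x = (z \in s)%:R * h z.
Proof.
move=> s_uniq; have [zs|zNs] := boolP (z \in s).
  rewrite (bigD1_seq z) //= eqxx mul1r big1 ?addr0 ?mul1r // => x.
  by rewrite eq_sym => /negbTE ->; rewrite mul0r.
rewrite mul0r big1_seq // => x /andP[_ xs].
by case: eqP => [zx|]; [move: zNs; rewrite zx xs | rewrite mul0r].
Qed.

Lemma norm_indicator_le1 {D : numDomainType} (b : bool) : `|b%:R : D| <= 1.
Proof. by case: b; rewrite ?normr1 ?normr0 ?ler01. Qed.

Section Phase.
Variable K : numClosedFieldType.

Definition phase (z : K) : K := z^* / `|z|.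

Lemma norm_phase_le1 (z : K) : `|phase z| <= 1.
Proof.
rewrite normrM normfV norm_conjC; have [->|z_neq0] := eqVneq z 0.
  by rewrite normr0 mul0r ler01.
by rewrite normr_id mulfV ?normr_eq0.
Qed.

Lemma mul_phase (z : K) : phase z * z = `|z|.
Proof.
have [->|z_neq0] := eqVneq z 0; first by rewrite normr0 mulr0.
by rewrite mulrAC -normCKC expr2 mulfK // normr_eq0.
Qed.

End Phase.

Section ComplexScalars.
Variable R : realType.
Local Notation C := (R[i]).

Lemma natmul_unbounded (e M : C) : 0 < e -> ~ (forall n, e *+ n <= M).
Proof.
move=> e_gt0 bounded.
have M_ge0 : 0 <= M by rewrite -(mulr0n e) bounded.
have [er Mr] := (gtr0_real e_gt0, ger0_real M_ge0).
move: e_gt0 M_ge0 bounded; rewrite -(RRe_real er) -(RRe_real Mr).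
set r := complex.Re e; set s := complex.Re M; rewrite !lecR ltcR => r_gt0 s_ge0.
move=> /(_ (Num.Def.archi_bound (s / r))); rewrite -rmorphMn lecR -mulr_natr.
have sr_ge0 : 0 <= s / r by rewrite divr_ge0 // ltW.
by rewrite mulrC -ler_pdivlMr // => /(lt_le_trans (archi_boundP sr_ge0)); rewrite ltxx.
Qed.

Section Families.
Variable J : choiceType.
Implicit Types (f : J -> C) (s t : C).

Lemma has_sum_unique f s t : has_sum f s -> has_sum f t -> s = t.
Proof.
move=> sum_s sum_t; apply/eqP; rewrite -subr_eq0; apply: contraT => st_neq0.
have e_gt0 : 0 < `|s - t| / 2 by rewrite divr_gt0 // normr_gt0.
have [F1 near_s] := sum_s _ e_gt0; have [F2 near_t] := sum_t _ e_gt0.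
have := near_s (F1 `|` F2)%fset (fsubsetUl _ _).
have := near_t (F1 `|` F2)%fset (fsubsetUr _ _).
set P := psum _ _ => Pt Ps.
have : `|s - t| < `|s - t| / 2 + `|s - t| / 2.
  apply: le_lt_trans (ltrD Ps Pt).
  by rewrite -{1}(subrK P s) -addrA (distrC P s) ler_normD.
by rewrite -splitr ltxx.
Qed.

Lemma usumE f s : has_sum f s -> usum f = s.
Proof. by move=> sum_s; apply: xget_unique => // t /has_sum_unique; apply. Qed.

Lemma usum1 f j0 : (forall j, j != j0 -> f j = 0) -> usum f = f j0.
Proof.
move=> f_supp; apply: usumE => e e_gt0; exists [fset j0]%fset => F sF.
have j0F : j0 \in F by apply: (fsubsetP sF); rewrite inE.
by rewrite /psum (bigD1_seq j0) //= big1 ?addr0 ?subrr ?normr0.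
Qed.

Lemma usum_fset (E : {fset J}) f : (forall j, j \in E) ->
  usum f = \sum_(j <- E) f j.
Proof.
move=> E_full; apply: usumE => e e_gt0; exists E => F sF.
have -> : F = E by apply/fsetP => x; rewrite E_full; apply: (fsubsetP sF).
by rewrite /psum subrr normr0.
Qed.

Lemma ell1_ellinf f : ell1 f -> ellinf f.
Proof.
by move=> [M f_le]; exists M => j; have := f_le [fset j]%fset; rewrite /psum big_seq_fset1.
Qed.

Lemma ell1_c0 f : ell1 f -> c0 f.
Proof.
move=> [M f_le] e e_gt0; have [large_fin|large_inf] :=
  pselect (finite_set [set j | e <= `|f j|]).
  have [F defF] := finite_fsetP.1 large_fin; exists F => j jNF.
  rewrite real_ltNge ?normr_real ?gtr0_real //; apply/negP => ej.
  have /= jF : [set` F] j by rewrite -defF.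
  by rewrite jF in jNF.
exfalso; apply: (natmul_unbounded (M := M) e_gt0) => n.
have [B B_large nB] := infinite_set_fset n large_inf.
apply: le_trans (f_le B); rewrite (le_trans (ler_wpMn2l (ltW e_gt0) nB)) //.
rewrite -sumr_const_seq /psum !big_seq; apply: ler_sum => j; exact: B_large.
Qed.

Lemma ellinf_cst (c : C) : ellinf (fun _ : J => c).
Proof. by exists `|c|. Qed.

Lemma ellinfM (S T : J -> C) : ellinf S -> ellinf T -> ellinf (fun j => S j * T j).
Proof.
move=> [M S_le] [N T_le]; exists (M * N) => j.
by rewrite normrM ler_pM.
Qed.

Lemma ellinf_indicator (b : J -> bool) : ellinf (fun j => (b j)%:R : C).
Proof. by exists 1 => j; apply: norm_indicator_le1. Qed.

Lemma ellinf_sum (X : Type) (s : seq X) (g : X -> J -> C) :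
  (forall x, ellinf (g x)) -> ellinf (fun j => \sum_(x <- s) g x j).
Proof.
move=> g_bdd; elim: s => [|x s [M sum_le]]; first by exists 0 => j; rewrite big_nil normr0.
have [Mx gx_le] := g_bdd x; exists (Mx + M) => j; rewrite big_cons.
by rewrite (le_trans (ler_normD _ _)) ?lerD.
Qed.

Section BoundedFunctional.
Variable m : (J -> C) -> C.
Hypothesis m_bdd : ellinf_dual m.

Lemma ellinf_dual_bound : exists2 M : C, 0 <= M & forall (T : J -> C) (K : C),
  0 <= K -> (forall j, `|T j| <= K) -> `|m T| <= M * K.
Proof.
case: m_bdd => _ [M m_le]; exists `|M| => // T K K_ge0 T_le.
have MK_ge0 : 0 <= M * K := le_trans (normr_ge0 _) (m_le T K T_le).
by rewrite -[K in _ * K](ger0_norm K_ge0) -normrM ger0_norm ?m_le.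
Qed.

Lemma ellinf_dual0 : m (fun _ => 0) = 0.
Proof.
have [M _ m_le] := ellinf_dual_bound.
by apply/eqP; rewrite -normr_le0 -[X in _ <= X](mulr0 M) m_le // => j; rewrite normr0.
Qed.

Lemma ellinf_dualD (S T : J -> C) : ellinf S -> ellinf T ->
  m (fun j => S j + T j) = m S + m T.
Proof.
move=> S_bdd T_bdd; rewrite -[m S]mul1r -(m_bdd.1 1 S T) //.
by congr m; apply: funext => j; rewrite mul1r.
Qed.

Lemma ellinf_dualZ (c : C) (S : J -> C) : ellinf S -> m (fun j => c * S j) = c * m S.
Proof.
move=> S_bdd; rewrite -[RHS]addr0 -ellinf_dual0 -(m_bdd.1 c S) //; last exact: ellinf_cst.
by congr m; apply: funext => j; rewrite addr0.
Qed.

Lemma ellinf_dualB (S T : J -> C) : ellinf S -> ellinf T ->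
  m (fun j => S j - T j) = m S - m T.
Proof.
move=> S_bdd T_bdd; rewrite addrC -mulN1r -(m_bdd.1 (-1) T S) //.
by congr m; apply: funext => j; rewrite mulN1r addrC.
Qed.

Lemma ellinf_dual_sum (X : Type) (s : seq X) (g : X -> J -> C) :
  (forall x, ellinf (g x)) ->
  m (fun j => \sum_(x <- s) g x j) = \sum_(x <- s) m (g x).
Proof.
move=> g_bdd; elim: s => [|x s IHs].
  by rewrite big_nil -[RHS]ellinf_dual0; congr m; apply: funext => j; rewrite big_nil.
rewrite big_cons -IHs -ellinf_dualD; [|exact: g_bdd|exact: ellinf_sum].
by congr m; apply: funext => j; rewrite big_cons.
Qed.

End BoundedFunctional.
End Families.

Section Pullback.
Variables (X Y : choiceType) (m : (X -> C) -> C) (p : X -> Y) (G : X -> C).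
Hypotheses (m_bdd : ellinf_dual m) (G_le1 : forall x, `|G x| <= 1).

Definition pullback_coef (y : Y) : C := m (fun x => (p x == y)%:R * G x).

Lemma pullback_coef_fsum (c : Y -> C) (L : {fset Y}) :
  \sum_(y <- L) c y * pullback_coef y = m (fun x => (p x \in L)%:R * (c (p x) * G x)).
Proof.
have coef_bdd y : ellinf (fun x => (p x == y)%:R * G x).
  by apply: ellinfM (ellinf_indicator _) _; exists 1.
transitivity (\sum_(y <- L) m (fun x => c y * ((p x == y)%:R * G x))).
  by apply: eq_bigr => y _; rewrite (ellinf_dualZ m_bdd).
rewrite -(ellinf_dual_sum m_bdd) => [|y]; last first.
  exact: ellinfM (ellinf_cst _ (c y)) (coef_bdd y).
congr m; apply: funext => x.
rewrite (eq_bigr (fun y => (p x == y)%:R * (c y * G x))) => [|y _].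
  exact: sumr_indicator (fset_uniq L).
by rewrite mulrCA.
Qed.

Lemma ell1_pullback_coef : ell1 pullback_coef.
Proof.
have [M M_ge0 m_le] := ellinf_dual_bound m_bdd; exists M => L.
have sum_ge0 : 0 <= \sum_(y <- L) `|pullback_coef y| by rewrite sumr_ge0.
rewrite /psum -(ger0_norm sum_ge0).
under eq_bigr do rewrite -mul_phase.
rewrite pullback_coef_fsum -[M]mulr1 m_le // => x.
rewrite normrM mulr_ile1 ?normr_ge0 ?norm_indicator_le1 //.
by rewrite normrM mulr_ile1 ?normr_ge0 ?norm_phase_le1.
Qed.

Lemma has_sum_pullback_coef (a : Y -> C) : ell1 a ->
  has_sum (fun y => a y * pullback_coef y) (m (fun x => a (p x) * G x)).
Proof.
move=> a_ell1 e e_gt0; have [M M_ge0 m_le] := ellinf_dual_bound m_bdd.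
have e'_gt0 : 0 < e / (M + 1) by rewrite divr_gt0 // ltr_wpDl.
have [F0 a_small] := ell1_c0 a_ell1 e'_gt0.
have aG_bdd : ellinf (fun x => a (p x) * G x).
  have [N a_le] := ell1_ellinf a_ell1; exists N => x.
  by rewrite normrM -[N]mulr1 ler_pM.
exists F0 => F sF; rewrite /psum pullback_coef_fsum -(ellinf_dualB m_bdd) //; last first.
  exact: ellinfM (ellinf_indicator _) aG_bdd.
apply: le_lt_trans (m_le _ _ (ltW e'_gt0) _) _ => [x|].
  have [pF|pNF] := boolP (p x \in F); first by rewrite mul1r subrr normr0 ltW.
  rewrite mul0r sub0r normrN normrM -[_ / _]mulr1 ler_pM // ltW // a_small //.
  by apply: contra pNF; apply: (fsubsetP sF).
by rewrite mulrA ltr_pdivrMr ?ltr_wpDl // mulrC ltr_pM2l // ltrDl.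
Qed.

End Pullback.

Section Matrices.
Variable I : choiceType.

Lemma wstar_weak_cont_pullback (p : J4 I -> J2 I) (G : J4 I -> C) :
  (forall y, `|G y| <= 1) -> wstar_weak_cont (fun (a : Mat R I) y => a (p y) * G y).
Proof.
move=> G_le1 a0 a0_ell1 F F_filter F_ell1 a_cvg m m_bdd e e_gt0.
have coef_c0 := ell1_c0 (ell1_pullback_coef p m_bdd G_le1).
apply: filterS (filterI (a_cvg _ coef_c0 e e_gt0) F_ell1) => a [near_a a_ell1] /=.
by rewrite -(usumE (has_sum_pullback_coef p m_bdd G_le1 a_ell1))
  -(usumE (has_sum_pullback_coef p m_bdd G_le1 a0_ell1)).
Qed.

Definition pistar_delta (x : J2 I) : J4 I -> C :=
  fun y => let '(i, j, k, l) := y in ((i == x.1) && (l == x.2) && (j == k))%:R.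

Lemma ipiE (m : (J4 I -> C) -> C) x : ipi m x = m (pistar_delta x).
Proof. by []. Qed.

Lemma act_l_pistar_delta (a : Mat R I) x : act_l a (pistar_delta x) =
  fun y => a (y.2, x.2) * ((y.1.1.1 == x.1) && (y.1.1.2 == y.1.2))%:R.
Proof.
apply: funext => -[[[i j] k] l]; rewrite /act_l (usum1 (j0 := x.2)) /= ?eqxx ?andbT //.
by move=> q /negbTE q_neq; rewrite q_neq andbF mulr0.
Qed.

Lemma act_r_pistar_delta (a : Mat R I) x : act_r (pistar_delta x) a =
  fun y => a (x.1, y.1.1.1) * ((y.2 == x.2) && (y.1.1.2 == y.1.2))%:R.
Proof.
apply: funext => -[[[i j] k] l]; rewrite /act_r (usum1 (j0 := x.1)) /= ?eqxx 1?mulrC //.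
by move=> q /negbTE q_neq; rewrite q_neq mul0r.
Qed.

Lemma sigma_wc_pistar_delta x : sigma_wc (pistar_delta x).
Proof.
split; [|split].
- by exists 1 => -[[[i j] k] l]; apply: norm_indicator_le1.
- rewrite (funext (act_l_pistar_delta ^~ x)).
  exact: (wstar_weak_cont_pullback (fun y => (y.2, x.2)) (fun y => norm_indicator_le1 _)).
- rewrite (funext (act_r_pistar_delta ^~ x)).
  exact: (wstar_weak_cont_pullback (fun y => (x.1, y.1.1.1))
    (fun y => norm_indicator_le1 _)).
Qed.

Definition matunit (x : J2 I) : Mat R I := fun z => (z == x)%:R.

Lemma ell1_matunit x : ell1 (matunit x).
Proof.
exists 1 => F; rewrite /psum (eq_bigr (fun z => (x == z)%:R * 1)) => [|z _].
  by rewrite sumr_indicator ?fset_uniq // mulr1; case: (x \in F); rewrite ?ler01.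
by rewrite /matunit normr_nat mulr1 eq_sym.
Qed.

Lemma act_l_matunit s u :
  act_l (matunit (s, u)) (pistar_delta (s, u)) = pistar_delta (s, s).
Proof.
rewrite act_l_pistar_delta; apply: funext => -[[[i j] k] l] /=.
rewrite /matunit xpair_eqE eqxx andbT.
by case: (l == s); rewrite ?mul1r ?mul0r ?andbT ?andbF.
Qed.

Lemma act_r_matunit s u :
  act_r (pistar_delta (s, u)) (matunit (s, u)) = pistar_delta (u, u).
Proof.
rewrite act_r_pistar_delta; apply: funext => -[[[i j] k] l] /=.
by rewrite /matunit xpair_eqE eqxx; case: (i == u); rewrite ?mul1r ?mul0r ?andbF.
Qed.

Lemma matmul_matunit (b : Mat R I) s u k : matmul b (matunit (s, u)) (k, u) = b (k, s).
Proof.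
rewrite /matmul (usum1 (j0 := s)) /= /matunit ?eqxx ?mulr1 // => q q_neq.
by rewrite xpair_eqE (negbTE q_neq) mulr0.
Qed.

Section Necessity.
Variable m : (J4 I -> C) -> C.
Hypotheses (m_bdd : ellinf_dual m)
  (m_comm : forall a T, ell1 a -> sigma_wc T -> m (act_r T a) = m (act_l a T)).

Lemma ipi_diag_const s u : ipi m (s, s) = ipi m (u, u).
Proof.
rewrite !ipiE -(act_l_matunit s u) -(act_r_matunit s u).
by rewrite (m_comm (ell1_matunit _) (sigma_wc_pistar_delta _)).
Qed.

Lemma norm_sum_pistar_delta_le1 (L : {fset I}) y :
  `|\sum_(t <- L) pistar_delta (t, t) y| <= 1.
Proof.
case: y => [[[i j] k] l] /=.
rewrite (eq_bigr (fun t => (i == t)%:R * ((l == t) && (j == k))%:R)) => [|t _].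
  by rewrite sumr_indicator ?fset_uniq // normrM mulr_ile1 ?norm_indicator_le1.
by case: (i == t); rewrite ?mul1r ?mul0r.
Qed.

Lemma ipi_diag_eq0 s : infinite_set [set: I] -> ipi m (s, s) = 0.
Proof.
move=> I_inf; apply: contrapT => diag_neq0.
have [M M_ge0 m_le] := ellinf_dual_bound m_bdd.
apply: (natmul_unbounded (M := M) (e := `|ipi m (s, s)|)).
  by rewrite normr_gt0; apply/eqP.
move=> n; have [L _ nL] := infinite_set_fset n I_inf.
have sum_diag : m (fun y => \sum_(t <- L) pistar_delta (t, t) y) = ipi m (s, s) *+ #|` L|.
  rewrite (ellinf_dual_sum m_bdd) => [|t]; last by case: (sigma_wc_pistar_delta (t, t)).
  by rewrite -sumr_const_seq; apply: eq_bigr => t _; rewrite -ipiE (ipi_diag_const t s).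
apply: le_trans (ler_wpMn2l (normr_ge0 _) nL) _.
by rewrite -normrMn -sum_diag -[M]mulr1 m_le // => y; apply: norm_sum_pistar_delta_le1.
Qed.

End Necessity.

Lemma jpca_finite : johnson_pseudo_connes_amenable R I -> finite_set [set: I].
Proof.
move=> [D [le [m [[_ [le_refl _]] [m_bdd [m_comm approx]]]]]].
apply: contrapT => I_inf; have [s _] := infinite_setN0 I_inf.
have half_gt0 : 0 < 2^-1 :> C by rewrite invr_gt0 ltr0n.
have [d near] := approx _ (ell1_matunit (s, s)) _ half_gt0.
have := near d (le_refl d) [fset (s, s)]%fset.
rewrite /psum big_seq_fset1 matmul_matunit (ipi_diag_eq0 (m_bdd d) (m_comm d)) //.
by rewrite /matunit eqxx sub0r normrN normr1 lt_geF // invf_lt1 ?ltr0n ?ltr1n.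
Qed.

Section Sufficiency.
Variables (E : {fset I}) (i0 : I).
Hypothesis E_full : forall i, i \in E.

(* Pairing with the diagonal \sum_k E_(k, i0) (x) E_(i0, k) of A (^) A. *)
Definition virtual_diagonal (T : J4 I -> C) : C := \sum_(k <- E) T (k, i0, i0, k).

Lemma ellinf_dual_virtual_diagonal : ellinf_dual virtual_diagonal.
Proof.
split=> [c S T _ _|]; first by rewrite /virtual_diagonal big_split /= mulr_sumr.
exists #|` E|%:R => T K T_le; rewrite /virtual_diagonal.
apply: le_trans (ler_norm_sum _ _ _) _.
by rewrite mulr_natl -(sumr_const_seq E K); apply: ler_sum => k _; apply: T_le.
Qed.

Lemma virtual_diagonal_comm (a : Mat R I) T :
  virtual_diagonal (act_r T a) = virtual_diagonal (act_l a T).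
Proof.
rewrite /virtual_diagonal /act_r /act_l.
under eq_bigr do rewrite (usum_fset _ E_full).
under [RHS]eq_bigr do rewrite (usum_fset _ E_full).
rewrite exchange_big /=; apply: eq_bigr => k _; apply: eq_bigr => q _.
by rewrite mulrC.
Qed.

Lemma ipi_virtual_diagonal x : ipi virtual_diagonal x = (x.2 == x.1)%:R.
Proof.
rewrite ipiE /virtual_diagonal (eq_bigr (fun k => (x.1 == k)%:R * (x.2 == x.1)%:R)).
  by rewrite sumr_indicator ?fset_uniq // E_full mul1r.
move=> k _ /=; rewrite eqxx andbT; have [->|_] := eqVneq k x.1.
  by rewrite mul1r eq_sym.
by rewrite mul0r.
Qed.

Lemma matmul_ipi_virtual_diagonal (a : Mat R I) : matmul (ipi virtual_diagonal) a = a.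
Proof.
apply: funext => -[i l]; rewrite /matmul (usum1 (j0 := i)) /=.
  by rewrite ipi_virtual_diagonal eqxx mul1r.
by move=> q /negbTE q_neq; rewrite ipi_virtual_diagonal q_neq mul0r.
Qed.

Lemma finite_jpca : johnson_pseudo_connes_amenable R I.
Proof.
exists unit, (fun _ _ => True), (fun _ => virtual_diagonal).
split; first by split; [exists tt | split=> // d1 d2; exists tt].
split=> [_|]; first exact: ellinf_dual_virtual_diagonal.
split=> [_ a T _ _|a _ e e_gt0]; first exact: virtual_diagonal_comm.
exists tt => _ _ F; rewrite /psum big1 ?ltW // => x _.
by rewrite matmul_ipi_virtual_diagonal subrr normr0.
Qed.

End Sufficiency.
End Matrices.
End ComplexScalars.

Theorem theorem3p2 (R : realType) (I : choiceType) :
  (exists i : I, True) ->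
  (johnson_pseudo_connes_amenable R I <-> finite_set [set: I]).
Proof.
move=> [i0 _]; split; first exact: jpca_finite.
move=> /finite_fsetP [E defE]; apply: (@finite_jpca R I E i0) => i.
by have : [set: I] i by []; rewrite defE.
Qed.
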